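(* Let $(\mathcal C,\mathcal D,O,\vec z,v)$ be a configuration for $(F,f)$, let $C$ be a PB constraint, and suppose there is a substitution $\omega$ such that $$\text{(a)}\quad \mathcal C\cup\mathcal D\cup\{f\le v-1\}\cup\{\neg C\}\ \vdash\ \mathcal C|_\omega\cup O(\vec z|_\omega,\vec z)\cup\{f|_\omega\le f\},$$ $$\text{(b)}\quad \mathcal C\cup\mathcal D\cup\{f\le v-1\}\cup\{\neg C\}\cup O(\vec z,\vec z|_\omega)\ \vdash\ 0\ge1.$$ If $(\mathcal C,\mathcal D,O,\vec z,v)$ is weakly valid then $(\mathcal C,\mathcal D\cup\{C\},O,\vec z,v)$ is weakly valid; if it is valid then $(\mathcal C,\mathcal D\cup\{C\},O,\vec z,v)$ is valid.
   Context: Boolean variables take values in $\{0,1\}$; a literal is a variable $x$ or $\bar x=1-x$. A PB constraint is $C:\ \sum_i a_i\ell_i\ge A$ with integer $a_i,A$; its negation $\neg C$ is $\sum_i -a_i\ell_i\ge -A+1$. A total assignment $\alpha$ satisfies $C$ if $\sum_i a_i\alpha(\ell_i)\ge A$. A PB formula is a finite set of PB constraints. A substitution $\omega$ maps variables to literals or to $\{0,1\}$ (identity outside its domain, extended to literals by $\omega(\bar x)=\overline{\omega(x)}$); $C|_\omega$ replaces each $\ell_i$ by $\omega(\ell_i)$, $G|_\omega=\{D|_\omega: D\in G\}$, and for a total assignment $\alpha$, $\alpha\circ\omega$ is $x\mapsto\alpha(\omega(x))$. An objective is $f=\sum_i w_i\ell_i$ with integer $w_i$; $f|_\omega=\sum_i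 w_i\omega(\ell_i)$; $f\le k$ and $f|_\omega\le f$ are read as PB constraints, and for $k=\infty$ the constraints $f\le\infty$, $f\le\infty-1$ are trivially true (empty). $G\vdash D$ means $D$ is derivable from $G$ in the cutting planes system (axioms from $G$, literal axioms $\ell\ge0$, positive integer linear combinations, division of a constraint with nonnegative coefficients by a positive integer rounding coefficients and degree up), where additionally $G\vdash D$ whenever $0\ge1$ is so derivable from $G\cup\{\neg D\}$; $G\vdash H$ means $G\vdash D$ for all $D\in H$. This derivability is sound. A preorder encoding is a PB formula $O(\vec u,\vec v)$ over two lists of $n$ placeholder variables with a list $\vec z=(z_1,\dots,z_n)$ of variables, such that $\alpha\preceq\beta$ iff $O(\vec z|_\alpha,\vec z|_\beta)$ is true is reflexive and transitive; here $O(\vec z|_\alpha,\vec z|_\beta)$ is $O$ with $u_i$ replaced by $\alpha(z_i)$ and $v_i$ by $\beta(z_i)$, so $O(\vec z|_\omega,\vec z)$ replaces $u_i$ by $\omega(z_i)$ and $v_i$ by $z_i$, and $O(\vec z,\vec z|_\omega)$ replaces $u_i$ by $z_i$ and $v_i$ by $\omega(z_i)$. $\alpha\preceq_f\beta$ iff $\alpha\preceq\beta$ and $f(\alpha)\le f(\beta)$. Fix input $F$ and objective $f$. A configuration $(\mathcal C,\mathcal D,O,\vec z,v)$ has PB sets $\mathcal C,\mathcal D$, a preorder encoding, and $v\in\mathbb Z\cup\{\infty\}$. It is weakly valid if (1) for every integer $v'<v$, satisfiability of $F\cup\{f\le v'\}$ implies satisfiability of $\mathcal C\cup\{f\le v'\}$;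 (2) every total $\rho$ satisfying $\mathcal C\cup\{f\le v-1\}$ admits a total $\rho'\preceq_f\rho$ satisfying $\mathcal C\cup\mathcal D\cup\{f\le v-1\}$. It is valid if also (3) $v<\infty$ implies $F\cup\{f\le v\}$ satisfiable; (4) for every integer $v'<v$, satisfiability of $\mathcal C\cup\{f\le v'\}$ implies satisfiability of $F\cup\{f\le v'\}$. *)

From Stdlib Require Import ZArith List.
From mathcomp Require Import ssreflect ssrfun ssrbool eqtype ssrnat fintype.
Import ListNotations.
Set Implicit Arguments.
Local Open Scope Z_scope.

Inductive lit (X : Type) := Pos (x : X) | Neg (x : X).
Arguments Pos {X}. Arguments Neg {X}.

(** Image of a variable under a substitution: a literal or a constant. *)
Inductive target (Y : Type) := TLit (l : lit Y) | TConst (b : bool).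
Arguments TLit {Y}. Arguments TConst {Y}.

(** [Constr ts A] is  sum_{(a,l) in ts} a*l >= A. *)
Record constraint (X : Type) := Constr { terms : list (Z * lit X); deg : Z }.
Arguments Constr {X}. Arguments terms {X}. Arguments deg {X}.

Definition formula (X : Type) := list (constraint X).

Definition var := nat.

Definition lit_val {X} (a : X -> bool) (l : lit X) : Z :=
  match l with
  | Pos x => if a x then 1 else 0
  | Neg x => if a x then 0 else 1
  end.

Definition lin_val {X} (a : X -> bool) (ts : list (Z * lit X)) : Z :=
  fold_right (fun t s => fst t * lit_val a (snd t) + s) 0 ts.

Definition sat {X} (a : X -> bool) (C : constraint X) : Prop :=
  deg C <= lin_val a (terms C).

Definition sat_formula {X} (a : X -> bool) (G : formula X) : Prop :=
  forall C, In C G -> sat a C.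

Definition satisfiable {X} (G : formula X) : Prop :=
  exists a : X -> bool, sat_formula a G.

Definition neg_constr {X} (C : constraint X) : constraint X :=
  Constr (map (fun t => (- fst t, snd t)) (terms C)) (- deg C + 1).

Definition neg_target {Y} (t : target Y) : target Y :=
  match t with
  | TLit (Pos y) => TLit (Neg y)
  | TLit (Neg y) => TLit (Pos y)
  | TConst b => TConst (negb b)
  end.

Definition inst_lit {X Y} (s : X -> target Y) (l : lit X) : target Y :=
  match l with Pos x => s x | Neg x => neg_target (s x) end.

Definition inst_constr {X Y} (s : X -> target Y) (C : constraint X) : constraint Y :=
  fold_right
    (fun t acc =>
       match inst_lit s (snd t) with
       | TLit m => Constr ((fst t, m) :: terms acc) (deg acc)
       | TConst b => Constr (terms acc) (deg acc - fst t * (if b then 1 else 0))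
       end)
    (Constr [] (deg C)) (terms C).

Definition inst_formula {X Y} (s : X -> target Y) (G : formula X) : formula Y :=
  map (inst_constr s) G.

(** A substitution: finite domain given as a list of (variable, image) pairs
    (first match wins); identity outside its domain. *)
Definition subst := list (var * target var).

Fixpoint subst_var (w : subst) (x : var) : target var :=
  match w with
  | [] => TLit (Pos x)
  | (y, t) :: w' => if Nat.eqb x y then t else subst_var w' x
  end.

Definition subst_constr (w : subst) (C : constraint var) := inst_constr (subst_var w) C.
Definition subst_formula (w : subst) (G : formula var) := inst_formula (subst_var w) G.

Definition target_val {Y} (a : Y -> bool) (t : target Y) : bool :=
  match t with
  | TLit (Pos y) => a y
  | TLit (Neg y) => negb (a y)
  | TConst b => b
  end.
Definition compose_subst (a : var -> bool) (w : subst) : var -> bool :=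
  fun x => target_val a (subst_var w x).

Definition objective := list (Z * lit var).
Definition obj_val (a : var -> bool) (f : objective) : Z := lin_val a f.

Definition obj_le (f : objective) (k : Z) : constraint var :=
  Constr (map (fun t => (- fst t, snd t)) f) (- k).

(** f|_w <= f read as a PB constraint: with f|_w normalised as
    (terms T >= deg D), i.e. f|_w = sum T - deg D, this is  f - sum T >= - deg D. *)
Definition obj_subst_le (f : objective) (w : subst) : constraint var :=
  let D := subst_constr w (Constr f 0) in
  Constr (f ++ map (fun t => (- fst t, snd t)) (terms D)) (- deg D).

Inductive zinf := Fin (k : Z) | Inf.

Definition obj_bound (f : objective) (v : zinf) : formula var :=
  match v with Fin k => [obj_le f k] | Inf => [] end.
Definition obj_bound_m1 (f : objective) (v : zinf) : formula var :=
  match v with Fin k => [obj_le f (k - 1)] | Inf => [] end.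

Definition below (v' : Z) (v : zinf) : Prop :=
  match v with Fin k => v' < k | Inf => True end.

(** Placeholder variables: inl i = u_i, inr i = v_i. *)
Definition place (n : nat) := ('I_n + 'I_n)%type.

Definition preceq {n} (O : formula (place n)) (z : 'I_n -> var)
  (a b : var -> bool) : Prop :=
  sat_formula (fun p : place n => match p with inl i => a (z i) | inr i => b (z i) end) O.

Definition is_preorder_encoding {n} (O : formula (place n)) (z : 'I_n -> var) : Prop :=
  (forall a, preceq O z a a) /\
  (forall a b c, preceq O z a b -> preceq O z b c -> preceq O z a c).

Definition preceq_f {n} (O : formula (place n)) (z : 'I_n -> var) (f : objective)
  (a b : var -> bool) : Prop :=
  preceq O z a b /\ obj_val a f <= obj_val b f.

Definition O_left {n} (w : subst) (O : formula (place n)) (z : 'I_n -> var) : formula var :=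
  inst_formula (fun p : place n => match p with
                  | inl i => subst_var w (z i) | inr i => TLit (Pos (z i)) end) O.
Definition O_right {n} (w : subst) (O : formula (place n)) (z : 'I_n -> var) : formula var :=
  inst_formula (fun p : place n => match p with
                  | inl i => TLit (Pos (z i)) | inr i => subst_var w (z i) end) O.

Definition add_constr (C1 C2 : constraint var) : constraint var :=
  Constr (terms C1 ++ terms C2) (deg C1 + deg C2).
Definition scale_constr (c : Z) (C : constraint var) : constraint var :=
  Constr (map (fun t => (c * fst t, snd t)) (terms C)) (c * deg C).
Definition ceil_div (a k : Z) : Z := - ((- a) / k).
Definition divide_constr (k : Z) (C : constraint var) : constraint var :=
  Constr (map (fun t => (ceil_div (fst t) k, snd t)) (terms C)) (ceil_div (deg C) k).

(** Constraints are identified up to normal form: the coefficient of each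
    variable x (writing xbar = 1 - x) and the resulting degree. *)
Definition coef (C : constraint var) (x : var) : Z :=
  fold_right (fun t s => match snd t with
                         | Pos y => if Nat.eqb x y then fst t + s else s
                         | Neg y => if Nat.eqb x y then - fst t + s else s
                         end) 0 (terms C).
Definition neg_const (C : constraint var) : Z :=
  fold_right (fun t s => match snd t with Pos _ => s | Neg _ => fst t + s end) 0 (terms C).
Definition equiv_constr (C D : constraint var) : Prop :=
  (forall x, coef C x = coef D x) /\ deg C - neg_const C = deg D - neg_const D.

Definition falsum : constraint var := Constr [] 1.

Inductive derives : formula var -> constraint var -> Prop :=
| d_axiom G C : In C G -> derives G C
| d_lit G l : derives G (Constr [(1, l)] 0)
| d_add G C1 C2 : derives G C1 -> derives G C2 -> derives G (add_constr C1 C2)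
| d_scale G c C : 0 < c -> derives G C -> derives G (scale_constr c C)
| d_div G k C : 0 < k -> (forall t, In t (terms C) -> 0 <= fst t) ->
    derives G C -> derives G (divide_constr k C)
| d_equiv G C D : equiv_constr C D -> derives G C -> derives G D
| d_contra G D : derives (neg_constr D :: G) falsum -> derives G D.

Definition derives_all (G H : formula var) : Prop := forall D, In D H -> derives G D.

Definition weakly_valid {n} (F : formula var) (f : objective) (Cc Dd : formula var)
  (O : formula (place n)) (z : 'I_n -> var) (v : zinf) : Prop :=
  (forall v' : Z, below v' v ->
     satisfiable (F ++ [obj_le f v']) -> satisfiable (Cc ++ [obj_le f v'])) /\
  (forall rho : var -> bool, sat_formula rho (Cc ++ obj_bound_m1 f v) ->
     exists rho' : var -> bool, preceq_f O z f rho' rho /\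
       sat_formula rho' (Cc ++ Dd ++ obj_bound_m1 f v)).

Definition valid {n} (F : formula var) (f : objective) (Cc Dd : formula var)
  (O : formula (place n)) (z : 'I_n -> var) (v : zinf) : Prop :=
  weakly_valid F f Cc Dd O z v /\
  (v <> Inf -> satisfiable (F ++ obj_bound f v)) /\
  (forall v' : Z, below v' v ->
     satisfiable (Cc ++ [obj_le f v']) -> satisfiable (F ++ [obj_le f v'])).

(* Adding C keeps every solution reachable by descending in the preorder.  Take a
   solution [a] of [Cc ++ Dd] (within the objective bound) that violates [C].  By (a)
   and soundness of cutting planes, [a o w] satisfies [Cc] and is [preceq_f]-below
   [a]; weak validity then yields a solution [b] of [Cc ++ Dd] below [a o w].  By (b),
   [a] is not below [a o w], so [b] is strictly below [a].  Since [preceq] only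
   depends on the finitely many values of [z], strict descent terminates, and it can
   only stop at a solution that also satisfies [C]. *)

From Stdlib Require Import ZArith List Lia Wf_nat ClassicalEpsilon.
From mathcomp Require Import ssreflect ssrfun ssrbool ssrnat fintype finfun.
Import ListNotations.
Local Open Scope Z_scope.

Lemma lit_val_bounds {X} (a : X -> bool) (l : lit X) : 0 <= lit_val a l <= 1.
Proof. by case: l => x /=; case: (a x); lia. Qed.

Lemma lin_val_app {X} (a : X -> bool) s t :
  lin_val a (s ++ t) = lin_val a s + lin_val a t.
Proof. by elim: s => [|[c l] s IH] /=; lia. Qed.

Lemma lin_val_scale {X} (a : X -> bool) c s :
  lin_val a (map (fun t => (c * fst t, snd t)) s) = c * lin_val a s.
Proof. by elim: s => [|[d l] s IH] /=; lia. Qed.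

Lemma lin_val_ext {X} (a b : X -> bool) s :
  (forall x, a x = b x) -> lin_val a s = lin_val b s.
Proof. by move=> E; elim: s => [|[c [x|x]] s IH] /=; rewrite ?E ?IH. Qed.

Lemma lin_val_opp {X} (a : X -> bool) s :
  lin_val a (map (fun t => (- fst t, snd t)) s) = - lin_val a s.
Proof. by elim: s => [|[d l] s IH] /=; lia. Qed.

Lemma sat_neg_constr {X} (a : X -> bool) C : sat a (neg_constr C) <-> ~ sat a C.
Proof. rewrite /sat /= lin_val_opp; lia. Qed.

Lemma sat_formula_app {X} (a : X -> bool) G H :
  sat_formula a (G ++ H) <-> sat_formula a G /\ sat_formula a H.
Proof.
split=> [HGH | [HG HH] D HD]; last by case: (in_app_or _ _ _ HD); auto.
by split=> D HD; apply: HGH; apply: in_or_app; auto.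
Qed.

Lemma sat_formula_cons {X} (a : X -> bool) C G :
  sat_formula a (C :: G) <-> sat a C /\ sat_formula a G.
Proof.
split=> [HCG | [HC HG] D [<- //|]]; last exact: HG.
by split=> [|D HD]; apply: HCG; [left|right].
Qed.

Lemma le_ceil_div_mul a k : 0 < k -> a <= ceil_div a k * k.
Proof. by rewrite /ceil_div => Hk; have := Z.mul_div_le (- a) k Hk; lia. Qed.

Lemma ceil_div_le a k b : 0 < k -> a <= b * k -> ceil_div a k <= b.
Proof.
rewrite /ceil_div => Hk Hab.
by have := Z.div_le_lower_bound (- a) k (- b) Hk; lia.
Qed.

(* Rounding up can only increase each term, since literals take values in [0, 1]. *)
Lemma lin_val_divide {X} (a : X -> bool) k s : 0 < k ->
  lin_val a s <= k * lin_val a (map (fun t => (ceil_div (fst t) k, snd t)) s).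
Proof.
move=> Hk; elim: s => [|[c l] s IH] /=; first lia.
by have := le_ceil_div_mul c k Hk; have := lit_val_bounds a l; nia.
Qed.

Definition lit_var (l : lit var) : var := match l with Pos x | Neg x => x end.

Fixpoint weighted_sum (a : var -> bool) (cf : var -> Z) (V : list var) : Z :=
  match V with
  | [] => 0
  | x :: V' => cf x * lit_val a (Pos x) + weighted_sum a cf V'
  end.

Lemma weighted_sum_ext a cf cg V :
  (forall x, cf x = cg x) -> weighted_sum a cf V = weighted_sum a cg V.
Proof. by move=> E; elim: V => //= x V ->; rewrite E. Qed.

Lemma weighted_sum_add a cf cg V :
  weighted_sum a (fun x => cf x + cg x) V = weighted_sum a cf V + weighted_sum a cg V.
Proof. by elim: V => /= [|x V ->]; ring. Qed.

Lemma weighted_sum_single_notin a y c V : ~ In y V ->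
  weighted_sum a (fun x => if Nat.eqb x y then c else 0) V = 0.
Proof.
elim: V => //= x V IH /Decidable.not_or [Hxy Hy].
by case: Nat.eqb_spec => [Exy|_]; [contradiction|rewrite IH //; lia].
Qed.

Lemma weighted_sum_single a y c V : NoDup V -> In y V ->
  weighted_sum a (fun x => if Nat.eqb x y then c else 0) V = c * lit_val a (Pos y).
Proof.
elim=> [//|x W Hx _ IH] /= [<-|Hy].
- by rewrite Nat.eqb_refl weighted_sum_single_notin //; lia.
- by case: Nat.eqb_spec => [Exy|_]; [rewrite Exy in Hx|rewrite IH //; lia].
Qed.

(* [lin_val a ts - neg_const] is the value of the normal form [sum_x coef x * x],
   once [V] lists every variable of [ts] exactly once. *)
Lemma lin_val_normal_form a ts V : NoDup V ->
  (forall t, In t ts -> In (lit_var (snd t)) V) ->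
  lin_val a ts - neg_const (Constr ts 0) = weighted_sum a (coef (Constr ts 0)) V.
Proof.
move=> HV; elim: ts => [_|[c l] ts IH Hts].
  by rewrite (weighted_sum_ext _ _ (fun _ => 0)) //; elim: (V) => //= x W <-; lia.
have {}IH := IH (fun t Ht => Hts t (or_intror Ht)).
have Hl := Hts _ (or_introl erefl); rewrite /= in Hl; clear Hts.
case: l Hl => y Hy.
- rewrite (weighted_sum_ext _ _ (fun x => (if Nat.eqb x y then c else 0)
                                          + coef (Constr ts 0) x)); last first.
    by move=> x; rewrite /coef /=; case: Nat.eqb.
  by rewrite weighted_sum_add weighted_sum_single // -IH /neg_const /=; lia.
- rewrite (weighted_sum_ext _ _ (fun x => (if Nat.eqb x y then - c else 0)
                                          + coef (Constr ts 0) x)); last first.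
    by move=> x; rewrite /coef /=; case: Nat.eqb.
  by rewrite weighted_sum_add weighted_sum_single // -IH /neg_const /=; case: (a y); lia.
Qed.

Lemma sat_equiv_constr a C D : equiv_constr C D -> sat a C -> sat a D.
Proof.
move=> [Hcoef Hdeg]; rewrite /sat.
set V := nodup Nat.eq_dec (map (fun t => lit_var (snd t)) (terms C ++ terms D)).
have HV : NoDup V by exact: NoDup_nodup.
have HVC : forall t, In t (terms C) -> In (lit_var (snd t)) V.
  by move=> t Ht; apply/nodup_In/in_map_iff; exists t; split=> //; apply: in_or_app; left.
have HVD : forall t, In t (terms D) -> In (lit_var (snd t)) V.
  by move=> t Ht; apply/nodup_In/in_map_iff; exists t; split=> //; apply: in_or_app; right.
have := lin_val_normal_form a _ _ HV HVC; have := lin_val_normal_form a _ _ HV HVD.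
rewrite (weighted_sum_ext _ (coef (Constr (terms C) 0)) (coef (Constr (terms D) 0))) //.
by rewrite /neg_const /= in Hdeg *; lia.
Qed.

Lemma derives_sound G D a : derives G D -> sat_formula a G -> sat a D.
Proof.
move=> HGD; elim: HGD a => {G D} [G C HC|G l|G C1 C2 _ IH1 _ IH2|G c C Hc _ IH
  |G k C Hk Hpos _ IH|G C D HCD _ IH|G D _ IH] a Ha.
- exact: Ha.
- by case: l => x; rewrite /sat /=; case: (a x); lia.
- by have := IH1 a Ha; have := IH2 a Ha; rewrite /sat /= lin_val_app; lia.
- by have := IH a Ha; rewrite /sat /= lin_val_scale; nia.
- have := IH a Ha; rewrite /sat /= => HC.
  by apply: ceil_div_le => //; have := lin_val_divide a k (terms C) Hk; nia.
- exact: sat_equiv_constr HCD (IH a Ha).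
- rewrite /sat; case: (Z_le_gt_dec (deg D) (lin_val a (terms D))) => // HD.
  have : sat a falsum.
    by apply/IH/sat_formula_cons; split=> //; rewrite sat_neg_constr /sat; lia.
  by rewrite /sat /=; lia.
Qed.

Section Instantiation.
Context {X Y : Type} (s : X -> target Y) (b : Y -> bool) (g : X -> bool).
Hypothesis g_def : forall x, g x = target_val b (s x).

Lemma lit_val_inst l : lit_val g l = Z.b2z (target_val b (inst_lit s l)).
Proof. by case: l => x /=; rewrite g_def; case: (s x) => [[y|y]|[]] //=; case: (b y). Qed.

Lemma slack_inst_constr C :
  lin_val b (terms (inst_constr s C)) - deg (inst_constr s C)
  = lin_val g (terms C) - deg C.
Proof.
case: C => ts d; rewrite /inst_constr /=.
elim: ts => [|[c l] ts IH] //=; rewrite lit_val_inst.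
by case: (inst_lit s l) => [[y|y]|[]]; rewrite /= /Z.b2z; try case: (b y) => /=; lia.
Qed.

Lemma sat_inst_constr C : sat b (inst_constr s C) <-> sat g C.
Proof. by have := slack_inst_constr C; rewrite /sat; lia. Qed.

Lemma sat_inst_formula G : sat_formula b (inst_formula s G) <-> sat_formula g G.
Proof.
split=> HG C HC.
- by apply/sat_inst_constr/HG/in_map.
- by case/in_map_iff: HC => D [<- HD]; apply/sat_inst_constr/HG.
Qed.

End Instantiation.

Lemma sat_subst_formula a w G :
  sat_formula a (subst_formula w G) <-> sat_formula (compose_subst a w) G.
Proof. exact: sat_inst_formula. Qed.

Lemma sat_O_left n (O : formula (place n)) z w a :
  sat_formula a (O_left w O z) <-> preceq O z (compose_subst a w) a.
Proof. by apply: sat_inst_formula => -[]. Qed.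

Lemma sat_O_right n (O : formula (place n)) z w a :
  sat_formula a (O_right w O z) <-> preceq O z a (compose_subst a w).
Proof. by apply: sat_inst_formula => -[]. Qed.

Lemma sat_obj_le a f k : sat a (obj_le f k) <-> obj_val a f <= k.
Proof. by rewrite /sat /obj_val /= lin_val_opp; lia. Qed.

Lemma sat_obj_subst_le a f w :
  sat a (obj_subst_le f w) <-> obj_val (compose_subst a w) f <= obj_val a f.
Proof.
have := slack_inst_constr (subst_var w) a (compose_subst a w) (fun _ => erefl) (Constr f 0).
by rewrite /sat /obj_val /= /subst_constr lin_val_app lin_val_opp; lia.
Qed.

Lemma sat_obj_bound_m1_antimono f v a b :
  obj_val b f <= obj_val a f -> sat_formula a (obj_bound_m1 f v) ->
  sat_formula b (obj_bound_m1 f v).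
Proof.
case: v => [k|] Hba; last by move=> _ ? [].
move=> /sat_formula_cons [/sat_obj_le Ha _].
by apply/sat_formula_cons; split=> //; apply/sat_obj_le; lia.
Qed.

Definition asbool (P : Prop) : bool := if excluded_middle_informative P then true else false.

Lemma asboolP (P : Prop) : reflect P (asbool P).
Proof. by rewrite /asbool; case: excluded_middle_informative => H; constructor. Qed.

Section PreorderDescent.
Variables (n : nat) (O : formula (place n)) (z : 'I_n -> var).
Hypothesis O_refl : forall a, preceq O z a a.
Hypothesis O_trans : forall a b c, preceq O z a b -> preceq O z b c -> preceq O z a c.

Definition z_values (a : var -> bool) : {ffun 'I_n -> bool} := [ffun i => a (z i)].

Lemma preceq_z_values a a' b :
  z_values a = z_values a' -> preceq O z a b -> preceq O z a' b.
Proof.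
move=> Eaa' Hab D HD; have := Hab D HD; congr (_ <= _); apply: lin_val_ext => -[i|i] //.
by have := congr1 (fun g : {ffun 'I_n -> bool} => g i) Eaa'; rewrite !ffunE.
Qed.

Definition strictly_below (a b : var -> bool) : Prop :=
  preceq O z a b /\ ~ preceq O z b a.

(* Since [preceq] only looks at the values of [z], assignments below [a] are
   counted through their finitely many [z]-value vectors. *)
Definition down_set (a : var -> bool) : pred {ffun 'I_n -> bool} :=
  fun g => asbool (exists c, z_values c = g /\ preceq O z c a).

Lemma down_set_proper a b : strictly_below b a -> down_set b \proper down_set a.
Proof.
move=> [Hba Hab]; apply/properP; split.
- apply/subsetP => g /asboolP [c [Ecg Hcb]].
  by apply/asboolP; exists c; split; last exact: O_trans Hcb Hba.
- exists (z_values a); first by apply/asboolP; exists a; split.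
  by apply/asboolP => -[c [Eca Hcb]]; apply/Hab/(preceq_z_values c).
Qed.

Lemma strictly_below_wf : well_founded strictly_below.
Proof.
apply: (well_founded_lt_compat _ (fun a => #|down_set a|)) => b a Hba.
exact/ssrnat.ltP/proper_card/down_set_proper.
Qed.

End PreorderDescent.

Lemma preceq_f_trans {n} {O : formula (place n)} {z f a b c} :
  is_preorder_encoding O z ->
  preceq_f O z f a b -> preceq_f O z f b c -> preceq_f O z f a c.
Proof. by move=> [_ O_trans] [Hab Hfab] [Hbc Hfbc]; split; [exact: O_trans Hab Hbc|lia]. Qed.

Lemma sat_witness {n} {O : formula (place n)} {z f Cc G w a} :
  derives_all G (subst_formula w Cc ++ O_left w O z ++ [obj_subst_le f w]) ->
  sat_formula a G ->
  sat_formula (compose_subst a w) Cc /\ preceq_f O z f (compose_subst a w) a.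
Proof.
move=> HG Ha.
have : sat_formula a (subst_formula w Cc ++ O_left w O z ++ [obj_subst_le f w]).
  by move=> D HD; exact: derives_sound (HG D HD) Ha.
rewrite !sat_formula_app sat_formula_cons sat_subst_formula sat_O_left sat_obj_subst_le.
by move=> [HCc [HO [Hf _]]].
Qed.

Lemma not_preceq_witness {n} {O : formula (place n)} {z G w a} :
  derives (G ++ O_right w O z) falsum -> sat_formula a G ->
  ~ preceq O z a (compose_subst a w).
Proof.
move=> HG Ha /sat_O_right HO.
have : sat a falsum by apply: derives_sound HG _; apply/sat_formula_app.
by rewrite /sat /=; lia.
Qed.

Section RedundanceDescent.
Variables (n : nat) (O : formula (place n)) (z : 'I_n -> var) (f : objective).
Variables (Cc Dd B : formula var) (C : constraint var) (w : subst).
Hypothesis O_preorder : is_preorder_encoding O z.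
Hypothesis B_antimono : forall a b,
  obj_val b f <= obj_val a f -> sat_formula a B -> sat_formula b B.
Hypothesis weak_validity : forall rho, sat_formula rho (Cc ++ B) ->
  exists rho', preceq_f O z f rho' rho /\ sat_formula rho' (Cc ++ Dd ++ B).
Hypothesis witness_below : forall a, sat_formula a (Cc ++ Dd ++ B) -> ~ sat a C ->
  sat_formula (compose_subst a w) Cc /\ preceq_f O z f (compose_subst a w) a.
Hypothesis witness_not_above : forall a, sat_formula a (Cc ++ Dd ++ B) -> ~ sat a C ->
  ~ preceq O z a (compose_subst a w).

Lemma descend_to_redundant a : sat_formula a (Cc ++ Dd ++ B) ->
  exists r, preceq_f O z f r a /\ sat_formula r (Cc ++ (Dd ++ [C]) ++ B).
Proof.
have [O_refl O_trans] := O_preorder.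
elim/(well_founded_ind (strictly_below_wf _ _ _ O_refl O_trans)): a => a IH Ha.
have [HC|HnC] : sat a C \/ ~ sat a C by rewrite /sat; lia.
  exists a; split; first by split; [exact: O_refl|lia].
  move: Ha; rewrite !sat_formula_app sat_formula_cons => -[HCc [HDd HB]].
  by do !split.
have [HwCc Hwa] := witness_below _ Ha HnC.
have HwB : sat_formula (compose_subst a w) B.
  by apply: B_antimono (proj2 Hwa) _; move: Ha => /sat_formula_app [_ /sat_formula_app []].
have [b [Hbw Hb]] := weak_validity _ (proj2 (sat_formula_app _ _ _) (conj HwCc HwB)).
have Hba := preceq_f_trans O_preorder Hbw Hwa.
have Hab : ~ preceq O z a b.
  by move=> Hab; apply: (witness_not_above _ Ha HnC); apply: O_trans Hab (proj1 Hbw).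
have [r [Hrb Hr]] := IH b (conj (proj1 Hba) Hab) Hb.
by exists r; split=> //; exact: preceq_f_trans O_preorder Hrb Hba.
Qed.

End RedundanceDescent.

Theorem mainTheorem7 (F : formula var) (f : objective) (Cc Dd : formula var)
  (n : nat) (O : formula (place n)) (z : 'I_n -> var) (v : zinf)
  (C : constraint var) (w : subst) :
  is_preorder_encoding O z ->
  derives_all (Cc ++ Dd ++ obj_bound_m1 f v ++ neg_constr C :: nil)
              (subst_formula w Cc ++ O_left w O z ++ obj_subst_le f w :: nil) ->
  derives (Cc ++ Dd ++ obj_bound_m1 f v ++ neg_constr C :: nil ++ O_right w O z) falsum ->
  (weakly_valid F f Cc Dd O z v -> weakly_valid F f Cc (Dd ++ C :: nil) O z v) /\
  (valid F f Cc Dd O z v -> valid F f Cc (Dd ++ C :: nil) O z v).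
Proof.
move=> O_preorder Hwitness Hdominance.
set B := obj_bound_m1 f v.
have sat_context a : sat_formula a (Cc ++ Dd ++ B) -> ~ sat a C ->
    sat_formula a ((Cc ++ Dd ++ B) ++ [neg_constr C]).
  move=> Ha HnC; apply/sat_formula_app; rewrite sat_formula_cons sat_neg_constr.
  by do !split=> //; move=> ? [].
rewrite -!app_assoc in sat_context.
have {}Hdominance : derives ((Cc ++ Dd ++ B ++ [neg_constr C]) ++ O_right w O z) falsum.
  by rewrite -!app_assoc.
have weak : weakly_valid F f Cc Dd O z v -> weakly_valid F f Cc (Dd ++ [C]) O z v.
  move=> [Hopt Hdom]; split=> // rho /Hdom [rho1 [Hrho1 Hsat1]].
  have [r [Hr Hsat]] := descend_to_redundant _ _ _ _ _ _ _ C w O_preorder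
    (sat_obj_bound_m1_antimono f v) Hdom
    (fun a Ha HnC => sat_witness Hwitness (sat_context a Ha HnC))
    (fun a Ha HnC => not_preceq_witness Hdominance (sat_context a Ha HnC)) rho1 Hsat1.
  by exists r; split=> //; exact: preceq_f_trans O_preorder Hr Hrho1.
by split=> // -[/weak Hw Hrest].
Qed.
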